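(* If $G$ is a graph with minimum degree $\delta(G)\ge 2$ and $\beta_0(G)=\Gamma(G)$, then $\beta_0(G)=\Gamma(G)=\Gamma_{\rm cer}(G)$.
   Context: All graphs are finite and simple; $\delta(G)$ is the minimum degree and $\beta_0(G)$ is the maximum cardinality of an independent set of vertices of $G$. A set $D\subseteq V_G$ is a dominating set of $G$ if every vertex of $V_G-D$ has a neighbor in $D$; $\Gamma(G)$ is the maximum cardinality of a minimal (with respect to inclusion) dominating set. A set $D$ is a certified dominating set of $G$ if $D$ is dominating and every vertex of $D$ has either zero or at least two neighbors in $V_G-D$; $\Gamma_{\rm cer}(G)$ is the maximum cardinality of a minimal (with respect to inclusion) certified dominating set. *)

From mathcomp Require Import all_boot.
Set Implicit Arguments. Unset Strict Implicit. Unset Printing Implicit Defensive.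

Section Graph.
Variables (T : finType) (e : rel T).

Definition simple_graph : Prop := symmetric e /\ irreflexive e.

Definition nbhd (v : T) : {set T} := [set u | e v u].

Definition deg (v : T) : nat := #|nbhd v|.

Definition min_degree_ge (k : nat) : Prop := forall v : T, k <= deg v.

Definition independent (S : {set T}) : bool :=
  [forall u in S, forall v in S, ~~ e u v].

Definition dominating (D : {set T}) : bool :=
  [forall v in ~: D, exists u in D, e v u].

Definition certified (D : {set T}) : bool :=
  dominating D &&
  [forall v in D, (#|nbhd v :&: ~: D| == 0) || (2 <= #|nbhd v :&: ~: D|)].

Definition beta0 : nat := \max_(S : {set T} | independent S) #|S|.

Definition upper_dom : nat := \max_(D : {set T} | minset dominating D) #|D|.

Definition upper_cer_dom : nat := \max_(D : {set T} | minset certified D) #|D|.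

End Graph.

(* A maximum independent set I is a minimal certified dominating set when
   delta >= 2, since every vertex of I has all of its (at least two) neighbours
   outside I; hence beta0 <= Gamma_cer.  Conversely a minimal certified
   dominating set D is a minimal dominating set.  The point is that every
   vertex of D has a neighbour outside D, hence at least two, so D minus any
   vertex stays certified.  Were some x in D to have N(x) inside D, pick Y among
   such "closed" vertices with D - Y dominating, first of maximum size and then
   with fewest vertices adjacent inside Y.  A closed z outside Y with exactly
   one neighbour y in Y could then be added to Y, or swapped with y, improving
   Y; so D - Y would be a smaller certified dominating set.  Thus
   Gamma_cer <= Gamma = beta0. *)

From mathcomp Require Import all_boot zify.
Set Implicit Arguments. Unset Strict Implicit. Unset Printing Implicit Defensive.

Section Domination.
Variables (T : finType) (e : rel T).

Lemma dominatingP (S : {set T}) :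
  reflect (forall w, w \notin S -> exists2 u, u \in S & e w u) (dominating e S).
Proof.
apply: (iffP forallP) => [domS w wS | domS w].
  by have := domS w; rewrite inE wS => /existsP[u /andP[uS ewu]]; exists u.
apply/implyP; rewrite inE => /domS[u uS ewu].
by apply/existsP; exists u; rewrite uS.
Qed.

Lemma certifiedP (S : {set T}) :
  reflect (dominating e S /\ {in S, forall v, #|nbhd e v :&: ~: S| != 1})
          (certified e S).
Proof.
apply: (iffP andP) => -[domS cerS]; split => //.
  by move=> v vS; move/forallP/(_ v): cerS; rewrite vS; case: #|_| => [|[]].
by apply/forallP => v; apply/implyP => /cerS; case: #|_| => [|[]].
Qed.

Lemma independentP (S : {set T}) :
  reflect {in S &, forall u v, ~~ e u v} (independent e S).
Proof.
apply: (iffP forallP) => [indS u v uS vS | indS u].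
  by move/implyP/(_ uS)/forallP/(_ v): (indS u); rewrite vS.
by apply/implyP => uS; apply/forallP => v; apply/implyP; apply: indS.
Qed.

Lemma dominatingS (A B : {set T}) :
  A \subset B -> dominating e A -> dominating e B.
Proof.
move=> /subsetP AB /dominatingP domA; apply/dominatingP => w wB.
have wA : w \notin A by apply: contra wB; apply: AB.
by have [u uA ewu] := domA w wA; exists u; first exact: AB.
Qed.

Lemma exists_nbr_neq (v a : T) : 2 <= deg e v -> exists2 u, e v u & u != a.
Proof.
move=> deg_v; apply/exists_inP; apply: contraTT deg_v.
rewrite negb_exists_in => /forall_inP nbr_a.
have : nbhd e v \subset [set a].
  by apply/subsetP => u; rewrite !inE => /nbr_a/negbNE.
by move/subset_leq_card; rewrite cards1 /deg -ltnNge ltnS.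
Qed.

Hypothesis e_sym : symmetric e.
Hypothesis e_irr : irreflexive e.

Lemma dominating_setD1 (S : {set T}) (v u : T) :
  dominating e S -> nbhd e v \subset S -> e v u -> dominating e (S :\ v).
Proof.
move=> /dominatingP domS /subsetP NvS evu; apply/dominatingP => w.
rewrite !inE negb_and negbK => /orP[/eqP-> | wS].
  exists u => //; rewrite !inE NvS ?inE // andbT.
  by apply: contraTneq evu => ->; rewrite e_irr.
have [x xS ewx] := domS w wS; exists x => //; rewrite !inE xS andbT.
apply: contraNneq wS => xv; apply: NvS.
by rewrite inE e_sym -xv.
Qed.

(* [w] is a private neighbour of [v] with respect to [S]. *)
Lemma nondominating_setD1 (S : {set T}) (v : T) :
  dominating e S -> ~~ dominating e (S :\ v) ->
  exists w, [/\ w \notin S :\ v, (w == v) || e w v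
              & {in S :\ v, forall u, ~~ e w u}].
Proof.
move=> /dominatingP domS; rewrite /dominating negb_forall_in.
case/exists_inP=> w; rewrite inE => wSv; rewrite negb_exists_in.
move=> /forall_inP nbr_w; exists w; split => //.
case: (eqVneq w v) => [// | wv].
have wS : w \notin S by move: wSv; rewrite !inE wv.
have [u uS ewu] := domS w wS.
case: (eqVneq u v) => [<- | uv]; first by rewrite ewu orbT.
by move: (nbr_w u); rewrite !inE uv uS ewu => /(_ isT).
Qed.

Lemma certified_gt1 (D D' : {set T}) (z : T) :
  certified e D -> z \in D -> ~~ (nbhd e z \subset D) -> D' \subset D ->
  1 < #|nbhd e z :&: ~: D'|.
Proof.
move=> /certifiedP[_ cerD] zD /subsetPn[u Nz_u uD] D'D.
have ext_z : 0 < #|nbhd e z :&: ~: D|.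
  by apply/card_gt0P; exists u; rewrite inE Nz_u inE uD.
have ext_z2 : 1 < #|nbhd e z :&: ~: D| by move: ext_z (cerD z zD); case: #|_| => [|[]].
by apply: leq_trans ext_z2 (subset_leq_card _); rewrite setIS ?setCS.
Qed.

Lemma maxset_independent_dominating (I : {set T}) :
  maxset (independent e) I -> dominating e I.
Proof.
move=> /maxsetP[/independentP indI maxI]; apply/dominatingP => w wI.
apply/exists_inP; apply: contraNT wI; rewrite negb_exists_in => /forall_inP nbr_w.
suff <- : w |: I = I by rewrite setU11.
apply: maxI; last exact: subsetUr.
apply/independentP => u v /setU1P[-> | uI] /setU1P[-> | vI].
- by rewrite e_irr.
- exact: nbr_w.
- by rewrite e_sym; apply: nbr_w.
- exact: indI.
Qed.

Hypothesis deg_ge2 : min_degree_ge e 2.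

Lemma maxset_independent_minset_certified (I : {set T}) :
  maxset (independent e) I -> minset (certified e) I.
Proof.
move=> maxI; have domI := maxset_independent_dominating maxI.
move: maxI => /maxsetP[/independentP indI _].
have nbhd_out v : v \in I -> nbhd e v :&: ~: I = nbhd e v.
  move=> vI; apply/setIidPl/subsetP => u; rewrite !inE => evu.
  by apply: contraL evu => uI; apply: indI.
apply/minsetP; split.
  apply/certifiedP; split => // v vI.
  by rewrite nbhd_out // neq_ltn (deg_ge2 v) orbT.
move=> B /certifiedP[/dominatingP domB _] /subsetP BI.
apply/setP => v; apply/idP/idP => [/BI // | vI].
apply: contraT => vB; have [u uB evu] := domB v vB.
by move: (indI v u vI (BI u uB)); rewrite evu.
Qed.

Section MinimalCertified.
Variable D : {set T}.
Hypothesis minD : minset (certified e) D.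

Let closed := [set v in D | nbhd e v \subset D].
Let removable (Y : {set T}) := (Y \subset closed) && dominating e (D :\: Y).
Let inner (Y : {set T}) := [set v in Y | [exists u in Y, e v u]].
(* Orders the sets lexicographically by (#|Y|, - #|inner Y|). *)
Let weight (Y : {set T}) := #|Y| * #|T|.+1 + (#|T| - #|inner Y|).

Let certD : certified e D.
Proof. by case/minsetP: minD. Qed.

Let closedP v : reflect (v \in D /\ nbhd e v \subset D) (v \in closed).
Proof. by rewrite inE; apply: andP. Qed.

Lemma weight_lt_card (Y Y' : {set T}) : #|Y| < #|Y'| -> weight Y < weight Y'.
Proof.
move=> ltYY'; have := max_card (inner Y); have := max_card (inner Y').
by rewrite /weight; nia.
Qed.

Lemma weight_lt_inner (Y Y' : {set T}) :
  #|Y| = #|Y'| -> #|inner Y'| < #|inner Y| -> weight Y < weight Y'.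
Proof. by move=> eqYY' ltY'Y; have := max_card (inner Y); rewrite /weight; lia. Qed.

Lemma removable_certified (Y : {set T}) :
  removable Y -> {in closed :\: Y, forall z, #|nbhd e z :&: Y| != 1} ->
  certified e (D :\: Y).
Proof.
move=> /andP[_ domY] nbrY; apply/certifiedP; split => // z /setDP[zD zY].
have [zcl | zcl] := boolP (z \in closed); last first.
  rewrite neq_ltn (certified_gt1 certD) ?orbT ?subsetDl //.
  by apply: contra zcl => NzD; apply/closedP.
have /closedP[_ /subsetP NzD] := zcl.
have -> : nbhd e z :&: ~: (D :\: Y) = nbhd e z :&: Y.
  apply/setP => u; rewrite !inE; case ezu: (e z u) => //=.
  by rewrite NzD ?inE ?ezu ?andbT ?negbK.
by apply: nbrY; rewrite inE zY.
Qed.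

Section Swap.
Variables (Y : {set T}) (z y : T).
Hypotheses (remY : removable Y) (zcl : z \in closed)
  (NzY : nbhd e z :&: Y = [set y]).

Let nbr_z_inY u : e z u -> (u \in Y) = (u == y).
Proof. by move=> ezu; move/setP/(_ u): NzY; rewrite !inE ezu. Qed.

Let ezy : e z y.
Proof. by move/setP/(_ y): NzY; rewrite !inE eqxx => /andP[]. Qed.

Let yY : y \in Y.
Proof. by rewrite nbr_z_inY. Qed.

Let ycl : y \in closed.
Proof. by case/andP: remY => /subsetP Ycl _; apply: Ycl. Qed.

Lemma nondominating_grow_nbhd :
  ~~ dominating e (D :\: (z |: Y)) -> nbhd e y \subset z |: Y.
Proof.
have /closedP[zD /subsetP NzD] := zcl.
move=> ndom; case/andP: remY => _ domY.
rewrite [z |: Y]setUC -setDDl in ndom.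
have [w [wS /orP[/eqP wz | ewz] nbr_w]] := nondominating_setD1 domY ndom.
  have [u ezu uy] := exists_nbr_neq y (deg_ge2 z).
  suff /nbr_w : u \in D :\: Y :\ z by rewrite wz ezu.
  rewrite !inE nbr_z_inY // uy NzD ?inE //= andbT.
  by apply: contraTneq ezu => ->; rewrite e_irr.
have ezw : e z w by rewrite e_sym.
have wy : w = y.
  apply/eqP; rewrite -nbr_z_inY //; apply: contraR wS => wY.
  rewrite !inE wY NzD ?inE //= andbT.
  by apply: contraTneq ewz => ->; rewrite e_irr.
have /closedP[_ /subsetP NyD] := ycl.
apply/subsetP => u Nyu; have uD : u \in D by apply: NyD.
have eyu : e y u by rewrite inE in Nyu.
have : u \notin D :\: Y :\ z by apply/negP => /nbr_w; rewrite wy eyu.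
by rewrite !inE uD andbT negb_and !negbK.
Qed.

Let yz : y != z.
Proof. by apply: contraTneq ezy => ->; rewrite e_irr. Qed.

Lemma removable_swap : removable (z |: (Y :\ y)).
Proof.
case/andP: remY => /subsetP Ycl domY; have /closedP[zD /subsetP NzD] := zcl.
have /closedP[yD _] := ycl.
apply/andP; split.
  by rewrite subUset sub1set zcl; apply/subsetP => u /setD1P[_ /Ycl].
have -> : D :\: (z |: (Y :\ y)) = (y |: (D :\: Y)) :\ z.
  apply/setP => u; rewrite !inE.
  case: (eqVneq u z) => [// | uz] /=.
  by case: (eqVneq u y) => [-> | uy] //=; rewrite yD.
apply: (dominating_setD1 _ _ ezy); first exact: dominatingS (subsetUr _ _) domY.
apply/subsetP => u Nzu; have ezu : e z u by rewrite inE in Nzu.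
by rewrite !inE NzD // nbr_z_inY // andbT orbN.
Qed.

Lemma inner_swap_lt :
  nbhd e y \subset z |: Y -> #|inner (z |: (Y :\ y))| < #|inner Y|.
Proof.
move=> /subsetP NyzY.
have Y2_edge v u : v \in z |: (Y :\ y) -> u \in z |: (Y :\ y) -> e v u ->
    (v \in Y) && (u \in Y).
  have noz w : w \in Y :\ y -> ~~ e z w.
    by case/setD1P=> wy wY; apply: contra wy => ezw; rewrite -nbr_z_inY.
  case/setU1P=> [-> | vYy] /setU1P[-> | uYy] evu.
  - by rewrite e_irr in evu.
  - by rewrite (negbTE (noz u uYy)) in evu.
  - by rewrite e_sym (negbTE (noz v vYy)) in evu.
  - by case/setD1P: vYy => _ ->; case/setD1P: uYy.
apply: proper_card; apply/properP; split.
  apply/subsetP => v /setIdP[vY2 /exists_inP[u uY2 evu]].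
  case/andP: (Y2_edge v u vY2 uY2 evu) => vY uY.
  by apply/setIdP; split => //; apply/exists_inP; exists u.
exists y; last by rewrite !inE eqxx (negbTE yz).
have [u eyu uz] := exists_nbr_neq z (deg_ge2 y).
rewrite !inE yY; apply/exists_inP; exists u => //.
by have := NyzY u; rewrite !inE eyu (negbTE uz) => /(_ isT).
Qed.

End Swap.

Lemma minset_certified_nbhd_notsub (x : T) : x \in D -> ~~ (nbhd e x \subset D).
Proof.
move=> xD; apply/negP => NxD; have xcl : x \in closed by apply/closedP.
have rem_x : removable [set x].
  rewrite /removable sub1set xcl; case/certifiedP: certD => domD _.
  by have [u exu _] := exists_nbr_neq x (deg_ge2 x); apply: dominating_setD1 exu.
have [Y /andP[Ycl domY] maxY] := arg_maxnP weight rem_x.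
have [y yY] : exists y, y \in Y.
  apply/set0Pn; apply: contraTneq (maxY _ rem_x) => ->.
  by rewrite -ltnNge weight_lt_card // cards1 cards0.
have remY : removable Y by apply/andP.
suff /(removable_certified remY) cerDY :
    {in closed :\: Y, forall z, #|nbhd e z :&: Y| != 1}.
  case/minsetP: minD => _ /(_ _ cerDY (subsetDl D Y))/setP/(_ y).
  by rewrite !inE yY; case/closedP: (subsetP Ycl y yY) => ->.
move=> z /setDP[zcl zY]; apply/negP => /cards1P[y' NzY].
have [domzY | ndomzY] := boolP (dominating e (D :\: (z |: Y))).
  have : removable (z |: Y) by rewrite /removable subUset sub1set zcl Ycl domzY.
  by move/maxY; apply/negP; rewrite -ltnNge weight_lt_card // cardsU1 zY.
move/maxY: (removable_swap remY zcl NzY); apply/negP; rewrite -ltnNge.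
apply: weight_lt_inner; last exact/inner_swap_lt/nondominating_grow_nbhd.
have y'Y : y' \in Y by move/setP/(_ y'): NzY; rewrite !inE eqxx => /andP[].
by rewrite cardsU1 !inE negb_and zY orbT (cardsD1 y' Y) y'Y.
Qed.

Lemma minset_certified_dominating : minset (dominating e) D.
Proof.
case/minsetP: (minD) => cerD minD'; case/certifiedP: (cerD) => domD _.
apply/minsetP; split => // B domB BD; apply/eqP; rewrite eqEsubset BD /=.
apply/subsetP => v vD; apply: contraT => vB.
have BDv : B \subset D :\ v.
  apply/subsetP => u uB; rewrite !inE (subsetP BD u uB) andbT.
  by apply: contraNneq vB => <-.
suff /minD' /(_ (subsetDl D [set v]))/setP/(_ v) : certified e (D :\ v).
  by rewrite !inE eqxx vD.
apply/certifiedP; split; first exact: dominatingS BDv domB.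
move=> z /setD1P[_ zD]; rewrite neq_ltn (certified_gt1 cerD) ?orbT ?subsetDl //.
exact: minset_certified_nbhd_notsub.
Qed.

End MinimalCertified.

Lemma beta0_le_upper_cer_dom : beta0 e <= upper_cer_dom e.
Proof.
have ind0 : independent e set0 by apply/independentP => u v; rewrite inE.
have [I indI maxI] := arg_maxnP (fun S : {set T} => #|S|) ind0.
have -> : beta0 e = #|I|.
  by apply/eqP; rewrite eqn_leq leq_bigmax_cond // andbT; apply/bigmax_leqP.
apply: leq_bigmax_cond; apply: maxset_independent_minset_certified.
apply/maxsetP; split => // B indB IB.
by apply/eqP; rewrite eq_sym eqEcard IB; apply: maxI.
Qed.

Lemma upper_cer_dom_le_upper_dom : upper_cer_dom e <= upper_dom e.
Proof.
by apply/bigmax_leqP => D /minset_certified_dominating minD; apply: leq_bigmax_cond.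
Qed.

End Domination.

Unset Implicit Arguments.

Theorem corollary3p6 (T : finType) (e : rel T) :
  simple_graph e ->
  min_degree_ge e 2 ->
  beta0 e = upper_dom e ->
  beta0 e = upper_dom e /\ upper_dom e = upper_cer_dom e.
Proof.
move=> [e_sym e_irr] deg_ge2 beta0_dom; split => //.
apply/eqP; rewrite eqn_leq upper_cer_dom_le_upper_dom // andbT -beta0_dom.
exact: beta0_le_upper_cer_dom.
Qed.
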